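(* Let $\gamma$ be a basic $\ell$-cover of a matroid $\mathcal{M}$ on $[n]$, let $N_\gamma=\prod_i x_i^{\gamma(i)}$ and let $N_\gamma=N_1\cdots N_s$ be its standard form. Set $\gamma_i:=\gamma_{N_i}$ for $1\le i\le s$, $\gamma_{s+1}:=0$, and $\gamma_0:=\gamma_{x_{[n]}}$ (the constant function $1$). Then $$\mathcal{M}(\gamma)=\bigoplus_{i=0}^{s}\mathcal{M}(\gamma)|_{\operatorname{supp}\gamma_i-\operatorname{supp}\gamma_{i+1}}.$$ Hence $\mathcal{M}(\gamma)=\mathcal{M}(\gamma)^0\oplus\mathcal{M}(\gamma)^+$, where $\mathcal{M}(\gamma)^0:=\mathcal{M}(\gamma)|_{[n]-\operatorname{supp}\gamma}$ and $\mathcal{M}(\gamma)^+:=\mathcal{M}(\gamma)|_{\operatorname{supp}\gamma}=\bigoplus_{i=1}^s\mathcal{M}(\gamma)|_{\operatorname{supp}\gamma_i-\operatorname{supp}\gamma_{i+1}}$. In particular, every basis $F$ of $\mathcal{M}(\gamma)^+$ satisfies $F\subseteq\operatorname{supp}\gamma$ and $\gamma(F)=\ell$, and $\gamma(G)=0$ for every basis $G$ of $\mathcal{M}(\gamma)^0$.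
   Context: Matroids are identified with their independence complexes. For $\gamma:[n]\to\mathbb{N}_0$ and $S\subseteq[n]$, $\gamma(S)=\sum_{i\in S}\gamma(i)$, $\operatorname{supp}\gamma=\{i:\gamma(i)>0\}$. $\gamma$ is an $\ell$-cover of $\mathcal{M}$ if $\gamma(F)\ge\ell$ for every basis $F$, basic if minimal among $\ell$-covers in the pointwise order. $\mathcal{M}(\gamma)$ (the focal matroid) is the complex generated by the bases $F$ with $\gamma(F)=\ell$; it is a matroid. For a monomial $N=\prod x_i^{a_i}$, $\gamma_N(i)=a_i$; $x_{[n]}=x_1\cdots x_n$. The standard form of a monomial $N$ is the unique factorization $N=N_1\cdots N_s$ into squarefree monomials $N_i\neq1$ with $\operatorname{supp}N_1\supseteq\cdots\supseteq\operatorname{supp}N_s$. $\mathcal{M}|_A$ is the restriction to $A$ (independent sets of $\mathcal{M}$ contained in $A$), and $\oplus$ is the direct sum of matroids on disjoint ground sets. *)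

From mathcomp Require Import all_boot.
Set Implicit Arguments. Unset Strict Implicit. Unset Printing Implicit Defensive.

Section Matroids.
Variable n : nat.
Notation E := 'I_n.

(* A simplicial complex / matroid is identified with its family of independent sets. *)
Definition is_matroid (M : {set {set E}}) : Prop :=
  [/\ set0 \in M,
      (forall I J : {set E}, J \in M -> I \subset J -> I \in M) &
      (forall I J : {set E}, I \in M -> J \in M -> #|I| < #|J| ->
         exists2 x, x \in J :\: I & x |: I \in M)].

Definition is_basis (M : {set {set E}}) (F : {set E}) : Prop :=
  maxset (fun X => X \in M) F.

Definition gsum (g : E -> nat) (S : {set E}) : nat := \sum_(i in S) g i.

Definition gsupp (g : E -> nat) : {set E} := [set i | 0 < g i].

Definition is_cover (M : {set {set E}}) (l : nat) (g : E -> nat) : Prop :=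
  forall F, is_basis M F -> l <= gsum g F.

Definition is_basic_cover (M : {set {set E}}) (l : nat) (g : E -> nat) : Prop :=
  is_cover M l g /\
  forall g', is_cover M l g' -> (forall i, g' i <= g i) -> forall i, g' i = g i.

Definition focal (M : {set {set E}}) (l : nat) (g : E -> nat) : {set {set E}} :=
  [set I : {set E} | [exists F : {set E},
      [&& maxset (fun X => X \in M) F, gsum g F == l & I \subset F]]].

Definition restrict (M : {set {set E}}) (A : {set E}) : {set {set E}} :=
  [set I in M | I \subset A].

Definition dsum k (Ms : 'I_k -> {set {set E}}) : {set {set E}} :=
  [set I : {set E} | [exists f : {ffun 'I_k -> {set E}},
      [forall i, f i \in Ms i] && (I == \bigcup_i f i)]].

(* A squarefree monomial prod_{j in A} x_j is identified with its support A
   (it is /= 1 iff A is nonempty).  The sequence S = [:: supp N_1; ...; supp N_s]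
   is a standard form of the monomial N_gamma = prod x_i^{gamma i} iff the
   N_i are /= 1, supports decrease, and N_1 * ... * N_s = N_gamma. *)
Definition is_standard_form (g : E -> nat) (S : seq {set E}) : Prop :=
  [/\ forall i, i < size S -> nth set0 S i != set0,
      forall i, i.+1 < size S -> nth set0 S i.+1 \subset nth set0 S i &
      forall j, g j = count (fun A : {set E} => j \in A) S].

(* supp gamma_k, for gamma_0 = 1, gamma_k = gamma_{N_k} (1 <= k <= s),
   gamma_{s+1} = 0 *)
Definition supp_k (S : seq {set E}) (k : nat) : {set E} :=
  if k == 0 then setT else nth set0 S k.-1.

Definition piece (S : seq {set E}) (k : nat) : {set E} :=
  supp_k S k :\: supp_k S k.+1.

End Matroids.

From mathcomp Require Import all_boot zify.
Set Implicit Arguments. Unset Strict Implicit. Unset Printing Implicit Defensive.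

(* Write B_t = {x | g x < t}.  Since g is an l-cover, every basis F with
   g(F) = l is greedy: F :&: B_t is a maximal independent subset of B_t for
   every t, as otherwise an exchange would produce a basis of weight < l.
   Conversely, a basis with this property has weight l, because
   g(F) = sum_t |F :\: B_(t+1)|.  Now let I be a union of independent sets of
   M(g) living on sets that share no level of g.  Then each level of I lies in
   a basis of M(g), and augmenting level by level inside these bases yields a
   greedy basis containing I, so I is independent in M(g).  This is the direct
   sum decomposition; the pieces of the standard form are exactly the level
   sets of g.  Minimality of the basic cover g is used only to make M(g)
   nonempty. *)

Section MatroidFacts.
Variable n : nat.
Local Notation E := 'I_n.
Variable M : {set {set E}}.
Hypothesis HM : is_matroid M.

Lemma indep_subset (I J : {set E}) : J \in M -> I \subset J -> I \in M.
Proof. by case: HM => _ H _; apply: H. Qed.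

Lemma indep_augment (I J : {set E}) : I \in M -> J \in M -> #|I| < #|J| ->
  exists2 x, x \in J :\: I & x |: I \in M.
Proof. by case: HM => _ _ H; apply: H. Qed.

Lemma basis_exists : exists F, is_basis M F.
Proof. by case: HM => M0 _ _; have [F bF _] := maxset_exists M0; exists F. Qed.

Lemma card_indep_le_basis (F J : {set E}) : is_basis M F -> J \in M -> #|J| <= #|F|.
Proof.
move=> /maxsetP [FM Fmax] JM; rewrite leqNgt; apply/negP => ltFJ.
have [x /setDP [_ xF] xFM] := indep_augment FM JM ltFJ.
by have /setP/(_ x) := Fmax _ xFM (subsetUr _ _); rewrite !inE eqxx (negbTE xF).
Qed.

Lemma indep_card_basis (F Z : {set E}) :
  is_basis M F -> Z \in M -> #|F| <= #|Z| -> is_basis M Z.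
Proof.
move=> bF ZM leFZ; apply/maxsetP; split => // B BM sZB.
apply/eqP; rewrite eq_sym eqEcard sZB /=.
exact: leq_trans (card_indep_le_basis bF BM) leFZ.
Qed.

Lemma indep_extend (I Y : {set E}) : I \in M -> Y \in M ->
  exists Z, [/\ Z \in M, I \subset Z, Z \subset I :|: Y & #|Y| <= #|Z|].
Proof.
move=> + YM; move Hk : (#|Y| - #|I|) => k.
elim: k I Hk => [|k IH] I Hk IM.
  by exists I; split; rewrite ?subsetUl //; lia.
have [|x /setDP [xY xI] xIM] := indep_augment IM YM; first lia.
have [|Z [ZM sxIZ sZ leYZ]] := IH _ _ xIM; first by rewrite cardsU1 xI; lia.
exists Z; split => //; first exact: subset_trans (subsetUr _ _) sxIZ.
by rewrite (subset_trans sZ) // -setUA subUset subxx andbT sub1set inE xY orbT.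
Qed.

Definition rank (A : {set E}) : nat := \max_(J in M | J \subset A) #|J|.

Lemma rank_ub (A J : {set E}) : J \in M -> J \subset A -> #|J| <= rank A.
Proof.
by move=> JM JA; apply: (leq_bigmax_cond (P := fun J => (J \in M) && _)); rewrite JM.
Qed.

Lemma rank_eq_card (A J : {set E}) : J \in M -> J \subset A ->
  (forall K, K \in M -> K \subset A -> #|K| <= #|J|) -> rank A = #|J|.
Proof.
move=> JM JA Jmax; apply/eqP; rewrite eqn_leq rank_ub // andbT.
by apply/bigmax_leqP => K /andP [KM KA]; apply: Jmax.
Qed.

Lemma rank_set0 : rank set0 = 0.
Proof.
apply/eqP; rewrite -leqn0; apply/bigmax_leqP => J /andP [_].
by rewrite subset0 => /eqP ->; rewrite cards0.
Qed.

End MatroidFacts.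

Lemma sum_ord_ltn (m N : nat) : \sum_(t < N) (t < m) = minn m N.
Proof. by elim: N => [|N IH]; rewrite ?big_ord0 ?minn0 // big_ord_recr /= IH; lia. Qed.

Section Levels.
Variable n : nat.
Local Notation E := 'I_n.
Variable g : E -> nat.

Definition sublevel (t : nat) : {set E} := [set x | g x < t].
Definition level (t : nat) : {set E} := [set x | g x == t].

Definition level_separated k (A : 'I_k -> {set E}) : Prop :=
  forall i j x y, x \in A i -> y \in A j -> g x = g y -> i = j.

Lemma sublevel_mono (u t : nat) : u <= t -> sublevel u \subset sublevel t.
Proof. by move=> ut; apply/subsetP => x; rewrite !inE => /leq_trans; apply. Qed.

Lemma sublevel0 : sublevel 0 = set0.
Proof. by apply/setP => x; rewrite !inE. Qed.

Lemma sublevelS (t : nat) : sublevel t.+1 = sublevel t :|: level t.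
Proof. by apply/setP => x; rewrite !inE ltnS leq_eqVlt orbC. Qed.

Lemma sublevel_max : sublevel (\max_x g x).+1 = setT.
Proof. by apply/setP => x; rewrite !inE ltnS leq_bigmax. Qed.

Lemma level_separated_levels k (A : 'I_k -> {set E}) (h : 'I_k -> nat) :
  injective h -> (forall i, A i = level (h i)) -> level_separated A.
Proof.
move=> h_inj hA i j x y; rewrite !hA !inE => /eqP hx /eqP hy gxy.
by apply: h_inj; rewrite -hx -hy.
Qed.

Lemma disjoint_levels (t u : nat) : t != u -> [disjoint level t & level u].
Proof.
move=> tu; rewrite -setI_eq0; apply/eqP/setP => x; rewrite !inE.
by apply: contraNF tu => /andP [/eqP <- /eqP <-].
Qed.

Lemma bigcup_levels (N : nat) : (forall x, g x < N) -> \bigcup_(t < N) level t = setT.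
Proof.
move=> gN; apply/setP => x; rewrite inE; apply/bigcupP.
by exists (Ordinal (gN x)); rewrite ?inE.
Qed.

Lemma gsum_subset (A B : {set E}) : A \subset B -> gsum g A <= gsum g B.
Proof.
by move=> sAB; rewrite /gsum [X in _ <= X](big_setID A) /= (setIidPr sAB) leq_addr.
Qed.

Lemma gsum_setI_supp (A : {set E}) : gsum g (A :&: gsupp g) = gsum g A.
Proof.
rewrite /gsum [RHS](big_setID (gsupp g)) /= [X in _ = _ + X]big1 ?addn0 // => x.
by rewrite !inE lt0n negbK => /andP [/eqP].
Qed.

Lemma gsum_eq0 (A : {set E}) : A \subset ~: gsupp g -> gsum g A = 0.
Proof.
rewrite -disjoints_subset => /disjoint_setI0 AS0.
by rewrite -gsum_setI_supp AS0 /gsum big_set0.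
Qed.

Lemma gsum_decr_le (i : E) (A : {set E}) :
  gsum g A <= gsum (fun j => g j - (j == i)) A + 1.
Proof.
rewrite /gsum; case: (boolP (i \in A)) => iA.
  rewrite !(bigD1 i iA) /= eqxx.
  have -> : \sum_(j in A | j != i) (g j - (j == i)) = \sum_(j in A | j != i) g j.
    by apply: eq_bigr => j /andP [_ /negbTE ->]; rewrite subn0.
  by set S := \sum_(j in A | j != i) g j; lia.
rewrite [X in _ <= X + _](eq_bigr g) ?leq_addr // => j jA.
have /negbTE -> : j != i by apply: contraNneq iA => <-.
exact: subn0.
Qed.

Lemma gsum_sublevels (A : {set E}) (N : nat) : (forall x, g x < N) ->
  gsum g A = \sum_(t < N) #|A :\: sublevel t.+1|.
Proof.
move=> gN; rewrite /gsum.
transitivity (\sum_(x in A) \sum_(t < N) (t < g x)).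
  by apply: eq_bigr => x _; rewrite sum_ord_ltn; have := gN x; lia.
rewrite exchange_big; apply: eq_bigr => t _.
rewrite -sum1_card big_mkcond [RHS]big_mkcond; apply: eq_bigr => x _.
by rewrite !inE ltnS -ltnNge; case: (x \in A); case: (t < g x).
Qed.

End Levels.

Section FocalBases.
Variable n : nat.
Local Notation E := 'I_n.
Variable M : {set {set E}}.
Hypothesis HM : is_matroid M.
Variable l : nat.
Variable g : E -> nat.
Hypothesis Hcov : is_cover M l g.

Local Notation B := (sublevel g).

Definition focal_basis (F : {set E}) : bool :=
  maxset (fun X => X \in M) F && (gsum g F == l).

Lemma mem_focal (I : {set E}) :
  (I \in focal M l g) = [exists F, focal_basis F && (I \subset F)].
Proof. by rewrite inE; apply: eq_existsb => F; rewrite andbA. Qed.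

Lemma focal_subset (I J : {set E}) : J \in focal M l g -> I \subset J -> I \in focal M l g.
Proof.
rewrite !mem_focal => /existsP [F /andP [bF JF]] IJ.
by apply/existsP; exists F; rewrite bF (subset_trans IJ JF).
Qed.

(* Exchanging an element of [F] of level >= t for an element of [J] of level
   < t would give a basis of weight < l. *)
Lemma focal_basis_sublevel (F J : {set E}) (t : nat) : focal_basis F ->
  J \in M -> J \subset B t -> #|J| <= #|F :&: B t|.
Proof.
move=> /andP [bF /eqP gF] JM sJ; rewrite leqNgt; apply/negP => ltJ.
have FM : F \in M by case/maxsetP: bF.
have [x /setDP [xJ xFt] xFM] :=
  indep_augment HM (indep_subset HM FM (subsetIl _ _)) JM ltJ.
have xt : g x < t by move: (subsetP sJ x xJ); rewrite inE.
have xF : x \notin F by apply: contra xFt => xF; rewrite !inE xF.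
have [Z [ZM sxFZ sZ leFZ]] := indep_extend HM xFM FM.
have bZ : is_basis M Z := indep_card_basis HM bF ZM leFZ.
have leZF : #|Z| <= #|F| := card_indep_le_basis HM bF ZM.
have xZ : x \in Z by apply: (subsetP sxFZ); rewrite !inE eqxx.
have sZxF : Z \subset x |: F.
  by apply: (subset_trans sZ); rewrite subUset subsetUr andbT setUS // subsetIl.
have [y yF yZ] : exists2 y, y \in F & y \notin Z.
  apply/subsetPn/negP => sFZ.
  have : #|x |: F| <= #|Z| by apply: subset_leq_card; rewrite subUset sub1set xZ.
  by rewrite cardsU1 xF; move: leZF; clear; lia.
have yt : t <= g y.
  by rewrite leqNgt; apply: contra yZ => yt; apply: (subsetP sxFZ); rewrite !inE yF yt orbT.
have : gsum g (y |: Z) <= gsum g (x |: F).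
  by apply: gsum_subset; rewrite subUset sZxF sub1set !inE yF orbT.
rewrite /gsum !big_setU1 //= -/(gsum g Z) -/(gsum g F) gF.
by move: (Hcov bZ) xt yt; clear; lia.
Qed.

Lemma focal_basis_rank (F : {set E}) (t : nat) : focal_basis F ->
  #|F :&: B t| = rank M (B t).
Proof.
move=> bF; symmetry; apply: rank_eq_card; last by move=> K; apply: focal_basis_sublevel.
  by case/andP: bF => /maxsetP [FM _] _; exact: (indep_subset HM FM (subsetIl F (B t))).
exact: subsetIr.
Qed.

Lemma greedy_focal_basis (F X : {set E}) : focal_basis F -> is_basis M X ->
  (forall t, t <= (\max_x g x).+1 -> #|X :&: B t| = rank M (B t)) -> focal_basis X.
Proof.
move=> bF bX Xrank; rewrite /focal_basis bX /=.
have gN x : g x < (\max_x g x).+1 by rewrite ltnS leq_bigmax.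
have cardX : #|X| = #|F|.
  by rewrite -(setIT X) -(setIT F) -(sublevel_max g) Xrank ?focal_basis_rank.
have /andP [_ /eqP <-] := bF; rewrite (gsum_sublevels X gN) (gsum_sublevels F gN).
apply/eqP; apply: eq_bigr => t _.
by rewrite !cardsD cardX Xrank ?focal_basis_rank.
Qed.

(* Both [Z :\: B t] and [F :&: level g t] have rank (B t.+1) - rank (B t)
   elements, and the first is contained in the second. *)
Lemma focal_level_step (X F : {set E}) (t : nat) :
  X \in M -> X \subset B t -> #|X| = rank M (B t) -> focal_basis F ->
  exists Z, [/\ Z \in M, Z \subset B t.+1, Z :&: B t = X,
                F :&: level g t \subset Z & #|Z| = rank M (B t.+1)].
Proof.
move=> XM XB cardX bF.
have FM : F \in M by case/andP: bF => /maxsetP [].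
set Y := F :&: B t.+1.
have cardY : #|Y| = rank M (B t.+1) := focal_basis_rank t.+1 bF.
have YM : Y \in M := indep_subset HM FM (subsetIl _ _).
have BtS : B t \subset B t.+1 := sublevel_mono g (leqnSn t).
have [Z [ZM XZ sZ leYZ]] := indep_extend HM XM YM.
have ZB : Z \subset B t.+1.
  by rewrite (subset_trans sZ) // subUset (subset_trans XB BtS) subsetIr.
have cardZ : #|Z| = rank M (B t.+1).
  by apply/eqP; rewrite eqn_leq rank_ub // -cardY leYZ.
have ZBt : Z :&: B t = X.
  apply/eqP; rewrite eq_sym eqEcard subsetI XZ XB cardX rank_ub ?subsetIr //.
  exact: (indep_subset HM ZM (subsetIl _ _)).
have YBt : Y :&: B t = F :&: B t by rewrite -setIA (setIidPr BtS).
have levelF : Y :\: B t = F :&: level g t.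
  apply/setP => x; rewrite !inE -leqNgt ltnS eqn_leq.
  by case: (t <= g x); rewrite /= ?andbT ?andbF.
have sZY : Z :\: B t \subset Y :\: B t.
  apply/subsetP => x /setDP [xZ xB]; rewrite inE xB /=.
  have /setUP [xX | //] := subsetP sZ x xZ.
  by rewrite (subsetP XB x xX) in xB.
have eqZY : Z :\: B t = Y :\: B t.
  apply/eqP; rewrite eqEcard sZY !cardsD ZBt YBt cardX cardZ -cardY /=.
  by rewrite (focal_basis_rank t bF).
exists Z; split => //.
by rewrite -levelF -eqZY subsetDl.
Qed.

Section GreedyChain.
Variable I : {set E}.
Hypothesis I_levels : forall t, exists2 F, focal_basis F & I :&: level g t \subset F.

Lemma focal_greedy_chain (t : nat) : exists X, [/\ X \in M, X \subset B t,
  I :&: B t \subset X & forall u, u <= t -> #|X :&: B u| = rank M (B u)].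
Proof.
elim: t => [|t [X [XM XB IX Xrank]]].
  exists set0; split; rewrite ?sub0set ?sublevel0 ?setI0 //; first by case: HM.
  by move=> u; rewrite leqn0 => /eqP ->; rewrite sublevel0 rank_set0 set0I cards0.
have [F bF IF] := I_levels t.
have cardX : #|X| = rank M (B t) by rewrite -Xrank // (setIidPl XB).
have [Z [ZM ZB ZBt FZ cardZ]] := focal_level_step XM XB cardX bF.
exists Z; split => //.
- rewrite sublevelS setIUr subUset (subset_trans IX) -?ZBt ?subsetIl //=.
  by apply: subset_trans FZ; rewrite subsetI IF subsetIr.
- move=> u; rewrite leq_eqVlt => /orP [/eqP -> | ]; first by rewrite (setIidPl ZB).
  by rewrite ltnS => ut; rewrite -Xrank // -ZBt -setIA (setIidPr (sublevel_mono g ut)).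
Qed.

Lemma focal_basis_of_levels : exists2 F, focal_basis F & I \subset F.
Proof.
have [X [XM _ IX Xrank]] := focal_greedy_chain (\max_x g x).+1.
have [F bF _] := I_levels 0.
have /andP [basF _] := bF.
exists X; last by rewrite sublevel_max setIT in IX.
apply: (greedy_focal_basis bF _ Xrank); apply: (indep_card_basis HM basF XM).
by rewrite -(setIT X) -(setIT F) -(sublevel_max g) Xrank // (focal_basis_rank _ bF).
Qed.

End GreedyChain.

Lemma basis_focal_supp (F : {set E}) :
  is_basis (restrict (focal M l g) (gsupp g)) F -> F \subset gsupp g /\ gsum g F = l.
Proof.
case/maxsetP => /setIdP [FMg Fs] Fmax; split => //.
move: (FMg); rewrite mem_focal => /existsP [F' /andP [bF' FF']].
have F'Mg : F' \in focal M l g.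
  by rewrite mem_focal; apply/existsP; exists F'; rewrite bF' subxx.
have F'sMp : F' :&: gsupp g \in restrict (focal M l g) (gsupp g).
  by rewrite inE subsetIr andbT (focal_subset F'Mg) ?subsetIl.
have <- := Fmax _ F'sMp; last by rewrite subsetI FF' Fs.
by rewrite gsum_setI_supp; case/andP: bF' => _ /eqP.
Qed.

Lemma basis_focal_nsupp (G : {set E}) :
  is_basis (restrict (focal M l g) (~: gsupp g)) G -> gsum g G = 0.
Proof. by case/maxsetP => /setIdP [_ sG] _; apply: gsum_eq0. Qed.

End FocalBases.

Section DirectSums.
Variable n : nat.
Local Notation E := 'I_n.

Lemma eq_dsum k (Ms Ms' : 'I_k -> {set {set E}}) : Ms =1 Ms' -> dsum Ms = dsum Ms'.
Proof.
move=> eqM; apply/setP => I; rewrite !inE; apply: eq_existsb => f.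
by congr andb; apply: eq_forallb => i; rewrite eqM.
Qed.

Lemma restrict_setT (K : {set {set E}}) : restrict K setT = K.
Proof. by apply/setP => I; rewrite inE subsetT andbT. Qed.

Lemma restrict_subset_dsum k (K : {set {set E}}) (A : 'I_k -> {set E}) (U : {set E}) :
  (forall I J : {set E}, J \in K -> I \subset J -> I \in K) -> U \subset \bigcup_i A i ->
  restrict K U \subset dsum (fun i => restrict K (A i)).
Proof.
move=> K_subset sUA; apply/subsetP => I; rewrite inE => /andP [IK IU].
rewrite inE; apply/existsP; exists [ffun i => I :&: A i]; apply/andP; split.
  by apply/forallP => i; rewrite ffunE inE subsetIr andbT (K_subset _ _ IK) ?subsetIl.
apply/eqP/setP => x; apply/idP/bigcupP => [xI | [i _]]; last by rewrite ffunE => /setIP [].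
have /bigcupP [i _ xA] := subsetP sUA x (subsetP IU x xI).
by exists i; rewrite ?ffunE ?inE ?xI.
Qed.

End DirectSums.

Section BasicCovers.
Variable n : nat.
Local Notation E := 'I_n.
Variable M : {set {set E}}.
Hypothesis HM : is_matroid M.
Variable l : nat.
Variable g : E -> nat.
Hypothesis Hbas : is_basic_cover M l g.

Local Notation Mg := (focal M l g).

(* Otherwise lowering [g] by one at a point of its support would still give an
   [l]-cover, contradicting minimality. *)
Lemma focal_basis_exists : exists F, focal_basis M l g F.
Proof.
case: (boolP [exists F, focal_basis M l g F]) => [/existsP // | /existsPn noF].
have [Hcov Hmin] := Hbas; exfalso.
case: (boolP [exists i, 0 < g i]) => [/existsP [i gi] | /existsPn g0].
  have cov' : is_cover M l (fun j => g j - (j == i)).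
    move=> F bF; have := noF F; rewrite /focal_basis bF /= => neqF.
    by move: (Hcov F bF) (gsum_decr_le g i F) neqF; clear; lia.
  by have := Hmin _ cov' (fun j => leq_subr _ _) i; rewrite eqxx; lia.
have [F bF] := basis_exists HM.
have gF : gsum g F = 0.
  by apply: gsum_eq0; apply/subsetP => j _; rewrite !inE g0.
by move: (noF F) (Hcov F bF); rewrite /focal_basis bF gF /= leqn0 eq_sym => /negbTE ->.
Qed.

Lemma dsum_focal_subset k (A : 'I_k -> {set E}) (U : {set E}) :
  level_separated g A -> \bigcup_i A i \subset U ->
  dsum (fun i => restrict Mg (A i)) \subset restrict Mg U.
Proof.
move=> sepA sAU; apply/subsetP => I.
rewrite inE => /existsP [f /andP [/forallP fA /eqP ->]].
have fMg i : f i \in Mg by case/setIdP: (fA i).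
have fAi i : f i \subset A i by case/setIdP: (fA i).
rewrite inE; apply/andP; split; last first.
  apply/bigcupsP => i _; apply: subset_trans (fAi i) _.
  exact: subset_trans (bigcup_sup i isT) sAU.
have [Hcov _] := Hbas.
suff [F bF sF] : exists2 F, focal_basis M l g F & \bigcup_i f i \subset F.
  by rewrite mem_focal; apply/existsP; exists F; rewrite bF sF.
apply: (focal_basis_of_levels HM Hcov) => t.
have [-> | [x /setIP [/bigcupP [i _ xf] xt]]] := set_0Vmem ((\bigcup_i f i) :&: level g t).
  by have [F bF] := focal_basis_exists; exists F; rewrite ?sub0set.
have := fMg i; rewrite mem_focal => /existsP [F /andP [bF fF]].
exists F => //; apply/subsetP => y /setIP [/bigcupP [j _ yf] yt].
have ij : i = j.
  apply: (sepA i j x y); rewrite ?(subsetP (fAi _) _ xf) ?(subsetP (fAi _) _ yf) //.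
  by move: xt yt; rewrite !inE => /eqP -> /eqP ->.
by move: yf; rewrite -ij => /(subsetP fF).
Qed.

Lemma focal_restrict_dsum k (A : 'I_k -> {set E}) (U : {set E}) :
  level_separated g A -> \bigcup_i A i = U ->
  restrict Mg U = dsum (fun i => restrict Mg (A i)).
Proof.
move=> sepA AU; apply/eqP; rewrite eqEsubset dsum_focal_subset ?AU //.
by rewrite restrict_subset_dsum ?AU //; apply: focal_subset.
Qed.

End BasicCovers.

Lemma mem_nth_decreasing n (S : seq {set 'I_n}) (x : 'I_n) :
  (forall i, i.+1 < size S -> nth set0 S i.+1 \subset nth set0 S i) ->
  forall i, (x \in nth set0 S i) = (i < count (fun A : {set 'I_n} => x \in A) S).
Proof.
elim: S => [|A S IH] decr i; first by rewrite nth_nil inE.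
have {}IH := IH (fun i => decr i.+1).
have countS : x \notin A -> count (fun A : {set 'I_n} => x \in A) S = 0.
  move=> xA; apply/eqP; rewrite -leqn0 leqNgt; apply: contra xA => cnt.
  have x0 : x \in nth set0 S 0 by rewrite IH.
  exact: subsetP (decr 0 (leq_trans cnt (count_size _ _))) x x0.
case: i => [|i] /=; case: (boolP (x \in A)) => xA //=; rewrite ?IH ?countS //.
Qed.

Section StandardForms.
Variable n : nat.
Local Notation E := 'I_n.
Variable g : E -> nat.
Variable S : seq {set E}.
Hypothesis HS : is_standard_form g S.

Lemma supp_k_standard (k : nat) : supp_k S k = [set x | k <= g x].
Proof.
case: HS => _ decr gS; apply/setP => x; rewrite /supp_k inE.
by case: k => [|k] //=; rewrite ?inE // mem_nth_decreasing // -gS.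
Qed.

Lemma piece_standard (k : nat) : piece S k = level g k.
Proof. by apply/setP => x; rewrite /piece !supp_k_standard !inE eqn_leq -ltnNge andbC. Qed.

Lemma standard_form_bound (x : E) : g x < (size S).+1.
Proof. by case: HS => _ _ gS; rewrite ltnS gS count_size. Qed.

End StandardForms.

Section FocalDecomposition.
Variable n : nat.
Local Notation E := 'I_n.
Variable M : {set {set E}}.
Hypothesis HM : is_matroid M.
Variable l : nat.
Variable g : E -> nat.
Hypothesis Hbas : is_basic_cover M l g.
Variable S : seq {set E}.
Hypothesis HS : is_standard_form g S.

Local Notation Mg := (focal M l g).

Lemma focal_dsum_pieces : Mg = dsum (fun i : 'I_(size S).+1 => restrict Mg (piece S i)).
Proof.
rewrite -[LHS]restrict_setT; apply: (focal_restrict_dsum HM Hbas).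
  exact: (level_separated_levels val_inj (piece_standard HS)).
under eq_bigr do rewrite (piece_standard HS).
exact: bigcup_levels (standard_form_bound HS).
Qed.

Lemma focal_supp_dsum_pieces :
  restrict Mg (gsupp g) = dsum (fun i : 'I_(size S) => restrict Mg (piece S i.+1)).
Proof.
apply: (focal_restrict_dsum HM Hbas).
  apply: (level_separated_levels (h := fun i => i.+1)) => [i j /succn_inj /val_inj //|i].
  exact: piece_standard.
apply/setP => x; rewrite inE; apply/bigcupP/idP => [[i _] | gx].
  by rewrite (piece_standard HS) inE => /eqP ->.
have ltx : (g x).-1 < size S by rewrite -ltnS prednK // standard_form_bound.
by exists (Ordinal ltx); rewrite // (piece_standard HS) inE prednK.
Qed.

Lemma focal_dsum_supp : Mg = dsum (fun i : 'I_2 =>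
  if i == ord0 then restrict Mg (~: gsupp g) else restrict Mg (gsupp g)).
Proof.
rewrite (@eq_dsum _ _ _ (fun i => restrict Mg (if i == ord0 then ~: gsupp g else gsupp g)));
  last by case=> [[|]].
rewrite -[LHS]restrict_setT; apply: (focal_restrict_dsum HM Hbas).
  move=> [[|[|//]] ?] [[|[|//]] ?] x y; rewrite /= !inE => hx hy gxy;
    by [apply: val_inj | move: hx; rewrite gxy hy | move: hy; rewrite -gxy hx].
by apply/setP => x; rewrite big_ord_recr big_ord1 /= !inE orNb.
Qed.

End FocalDecomposition.

Theorem theorem3p7 (n : nat) (M : {set {set 'I_n}}) (l : nat) (g : 'I_n -> nat)
    (S : seq {set 'I_n}) :
  is_matroid M -> is_basic_cover M l g -> is_standard_form g S ->
  let Mg := focal M l g in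
  let s := size S in
  let M0 := restrict Mg (~: gsupp g) in
  let Mp := restrict Mg (gsupp g) in
  [/\ (* the pieces are pairwise disjoint and cover [n] *)
      (forall i j : 'I_s.+1, i != j -> [disjoint piece S i & piece S j]),
      \bigcup_(i < s.+1) piece S i = setT &
      (* M(gamma) = (+)_{i=0}^{s} M(gamma)|_{supp gamma_i - supp gamma_{i+1}} *)
      Mg = dsum (fun i : 'I_s.+1 => restrict Mg (piece S i))] /\
  [/\
      (* M(gamma) = M(gamma)^0 (+) M(gamma)^+ *)
      Mg = dsum (fun i : 'I_2 => if i == ord0 then M0 else Mp),
      (* M(gamma)^+ = (+)_{i=1}^{s} M(gamma)|_{supp gamma_i - supp gamma_{i+1}} *)
      Mp = dsum (fun i : 'I_s => restrict Mg (piece S i.+1)),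
      (forall F, is_basis Mp F -> F \subset gsupp g /\ gsum g F = l) &
      (forall G, is_basis M0 G -> gsum g G = 0)].
Proof.
move=> HM Hbas HS Mg s M0 Mp; split; split.
- by move=> i j ij; rewrite !(piece_standard HS) disjoint_levels.
- under eq_bigr do rewrite (piece_standard HS).
  exact: bigcup_levels (standard_form_bound HS).
- exact: focal_dsum_pieces.
- exact: focal_dsum_supp.
- exact: focal_supp_dsum_pieces.
- exact: basis_focal_supp.
- exact: basis_focal_nsupp.
Qed.
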